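(* Let $R\subseteq\mathbb{R}^2$ be open and let $f:R\to\mathbb{R}^2$ be a $C^1$ mapping such that its critical set $S$ is nowhere dense. Suppose that $C(f)$ has non-empty interior. Then the points $w$ with $\mathrm{Val}(f,w)=\infty$ are dense in the interior of $C(f)$.
   Context: Write $f=(u,v)$; $J_f=u_xv_y-u_yv_x$ and $S=\{z\in R: J_f(z)=0\}$. $C(f)$ is the set of finite points $\zeta\in\mathbb{R}^2$ for which there is a sequence $(z_n)\subset R$ converging to a point of $\partial R$ or with $|z_n|\to\infty$, such that $f(z_n)\to\zeta$. $\mathrm{Val}(f,w)$ is the number (possibly infinite) of distinct $z\in R$ with $f(z)=w$. *)

From Stdlib Require Import Reals List.
From Coquelicot Require Import Coquelicot.
Open Scope R_scope.

Definition pt := (R * R)%type.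

Definition edist (p q : pt) : R :=
  sqrt ((fst p - fst q) ^ 2 + (snd p - snd q) ^ 2).

Definition enorm (p : pt) : R := sqrt (fst p ^ 2 + snd p ^ 2).

Definition eball (p : pt) (r : R) (q : pt) : Prop := edist p q < r.

Definition is_open (A : pt -> Prop) : Prop :=
  forall p, A p -> exists r, 0 < r /\ forall q, eball p r q -> A q.

Definition interior2 (A : pt -> Prop) (p : pt) : Prop :=
  exists r, 0 < r /\ forall q, eball p r q -> A q.

Definition closure2 (A : pt -> Prop) (p : pt) : Prop :=
  forall r, 0 < r -> exists q, A q /\ eball p r q.

Definition boundary (A : pt -> Prop) (p : pt) : Prop :=
  closure2 A p /\ ~ interior2 A p.

Definition nowhere_dense (A : pt -> Prop) : Prop :=
  forall p, ~ interior2 (closure2 A) p.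

Definition seq_cv (z : nat -> pt) (l : pt) : Prop :=
  forall eps, 0 < eps -> exists N, forall n, (N <= n)%nat -> edist (z n) l < eps.

Definition seq_to_infty (z : nat -> pt) : Prop :=
  forall M, exists N, forall n, (N <= n)%nat -> M < enorm (z n).

Definition dx (u : R -> R -> R) (x y : R) : R := Derive (fun t => u t y) x.
Definition dy (u : R -> R -> R) (x y : R) : R := Derive (fun t => u x t) y.

Definition C1_on (D : pt -> Prop) (u : R -> R -> R) : Prop :=
  forall x y, D (x, y) ->
    differentiable_pt_lim u x y (dx u x y) (dy u x y) /\
    continuity_2d_pt (dx u) x y /\ continuity_2d_pt (dy u) x y.

Definition jac (u v : R -> R -> R) (p : pt) : R :=
  dx u (fst p) (snd p) * dy v (fst p) (snd p)
  - dy u (fst p) (snd p) * dx v (fst p) (snd p).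

Definition fmap (u v : R -> R -> R) (p : pt) : pt := (u (fst p) (snd p), v (fst p) (snd p)).

Definition crit (D : pt -> Prop) (u v : R -> R -> R) (z : pt) : Prop :=
  D z /\ jac u v z = 0.

Definition cluster_set (D : pt -> Prop) (u v : R -> R -> R) (w : pt) : Prop :=
  exists z : nat -> pt,
    (forall n, D (z n)) /\
    ((exists b, boundary D b /\ seq_cv z b) \/ seq_to_infty z) /\
    seq_cv (fun n => fmap u v (z n)) w.

(* Val(f,w) = infinity: infinitely many distinct z in D with f z = w *)
Definition val_infinite (D : pt -> Prop) (u v : R -> R -> R) (w : pt) : Prop :=
  ~ exists l : list pt, forall z, D z -> fmap u v z = w -> In z l.

(* A nested-ball argument. Let B(c, r) be a target ball inside the interior of C(f) all of
   whose points have a preimage in each of n pairwise disjoint closed balls contained in R.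
   Since c is a cluster value, f(z) is close to c for some z lying outside these finitely many
   compact balls; as S is nowhere dense, z may be taken to be a regular point. By the inverse
   function theorem (here: a Newton iteration with frozen derivative is a contraction), f maps
   a small closed ball around z, disjoint from the others, onto a neighbourhood of f(z). This
   yields a smaller target ball with n + 1 sheets. The centres of the target balls converge
   to a point having a preimage in each of infinitely many disjoint balls. *)

From Stdlib Require Import Reals List Lra Lia Classical ClassicalEpsilon ChoiceFacts.
From Coquelicot Require Import Coquelicot.
Open Scope R_scope.

Lemma edist_ge0 p q : 0 <= edist p q.
Proof. apply sqrt_pos. Qed.

Lemma edist_sym p q : edist p q = edist q p.
Proof. unfold edist; f_equal; ring. Qed.

Lemma edist_xx p : edist p p = 0.
Proof. unfold edist; rewrite !Rminus_diag; simpl; rewrite Rmult_0_l, Rplus_0_l; apply sqrt_0. Qed.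

Lemma Rabs_fst_le_edist p q : Rabs (fst p - fst q) <= edist p q.
Proof.
  unfold edist; rewrite <- (sqrt_pow2 (Rabs _)), pow2_abs by apply Rabs_pos.
  apply sqrt_le_1_alt; generalize (pow2_ge_0 (snd p - snd q)); lra.
Qed.

Lemma Rabs_snd_le_edist p q : Rabs (snd p - snd q) <= edist p q.
Proof.
  unfold edist; rewrite <- (sqrt_pow2 (Rabs _)), pow2_abs by apply Rabs_pos.
  apply sqrt_le_1_alt; generalize (pow2_ge_0 (fst p - fst q)); lra.
Qed.

Lemma edist_le_l1 p q : edist p q <= Rabs (fst p - fst q) + Rabs (snd p - snd q).
Proof.
  unfold edist; set (a := fst p - fst q); set (b := snd p - snd q).
  generalize (Rabs_pos a) (Rabs_pos b); intros Ha Hb.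
  rewrite <- (sqrt_pow2 (Rabs a + Rabs b)), <- (pow2_abs a), <- (pow2_abs b) by lra.
  apply sqrt_le_1_alt; nra.
Qed.

Lemma edist_triangle p q r : edist p q <= edist p r + edist r q.
Proof.
  unfold edist.
  set (a1 := fst p - fst r); set (a2 := snd p - snd r).
  set (b1 := fst r - fst q); set (b2 := snd r - snd q).
  replace (fst p - fst q) with (a1 + b1) by (unfold a1, b1; ring).
  replace (snd p - snd q) with (a2 + b2) by (unfold a2, b2; ring).
  (* Cauchy-Schwarz bounds the cross term of the square of the right-hand side *)
  generalize (sqrt_cauchy a1 a2 b1 b2); unfold Rsqr; intro Hcs.
  replace (a1 * a1 + a2 * a2) with (a1 ^ 2 + a2 ^ 2) in Hcs by ring.
  replace (b1 * b1 + b2 * b2) with (b1 ^ 2 + b2 ^ 2) in Hcs by ring.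
  set (A := sqrt (a1 ^ 2 + a2 ^ 2)) in *; set (B := sqrt (b1 ^ 2 + b2 ^ 2)) in *.
  assert (HA : A * A = a1 ^ 2 + a2 ^ 2) by (apply sqrt_sqrt; nra).
  assert (HB : B * B = b1 ^ 2 + b2 ^ 2) by (apply sqrt_sqrt; nra).
  generalize (sqrt_pos (a1 ^ 2 + a2 ^ 2)) (sqrt_pos (b1 ^ 2 + b2 ^ 2)); fold A B; intros.
  rewrite <- (sqrt_pow2 (A + B)) by lra.
  apply sqrt_le_1_alt; nra.
Qed.

Lemma edist_eq0 p q : edist p q = 0 -> p = q.
Proof.
  intro H; destruct p as [p1 p2], q as [q1 q2].
  generalize (Rabs_fst_le_edist (p1, p2) (q1, q2)) (Rabs_snd_le_edist (p1, p2) (q1, q2)).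
  rewrite H; simpl; intros H1 H2.
  generalize (Rabs_pos (p1 - q1)) (Rabs_pos (p2 - q2)); intros.
  assert (E1 : Rabs (p1 - q1) = 0) by lra; assert (E2 : Rabs (p2 - q2) = 0) by lra.
  apply Rabs_eq_0 in E1; apply Rabs_eq_0 in E2; f_equal; lra.
Qed.

Lemma enorm_edist p : enorm p = edist p (0, 0).
Proof. unfold enorm, edist; simpl; f_equal; ring. Qed.

Lemma seq_cv_unique z l l' : seq_cv z l -> seq_cv z l' -> l = l'.
Proof.
  intros Hl Hl'; apply edist_eq0.
  destruct (Req_dec (edist l l') 0) as [|Hne]; [assumption | exfalso].
  generalize (edist_ge0 l l'); intro Hge.
  destruct (Hl (edist l l' / 2)) as [N HN]; [lra|].
  destruct (Hl' (edist l l' / 2)) as [N' HN']; [lra|].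
  specialize (HN (N + N')%nat ltac:(lia)); specialize (HN' (N + N')%nat ltac:(lia)).
  generalize (edist_triangle l l' (z (N + N')%nat)); rewrite (edist_sym l (z _)); lra.
Qed.

Lemma edist_le_seq_cv p z l B N : seq_cv z l ->
  (forall n, (N <= n)%nat -> edist p (z n) <= B) -> edist p l <= B.
Proof.
  intros Hl HB; apply Rnot_lt_le; intro Hlt.
  destruct (Hl (edist p l - B)) as [M HM]; [lra|].
  specialize (HM (N + M)%nat ltac:(lia)); specialize (HB (N + M)%nat ltac:(lia)).
  generalize (edist_triangle p l (z (N + M)%nat)); lra.
Qed.

Lemma cauchy_seq_cv z :
  (forall e, 0 < e -> exists N, forall n m, (N <= n)%nat -> (N <= m)%nat -> edist (z n) (z m) < e) ->
  exists l, seq_cv z l.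
Proof.
  intro Hc.
  assert (Hcoord : forall proj : pt -> R, (forall p q, Rabs (proj p - proj q) <= edist p q) ->
            Cauchy_crit (fun n => proj (z n))).
  { intros proj Hp e He; destruct (Hc e He) as [N HN]; exists N; intros n m Hn Hm.
    eapply Rle_lt_trans; [apply Hp | apply HN; lia]. }
  destruct (Rcomplete.R_complete _ (Hcoord fst Rabs_fst_le_edist)) as [l1 Hl1].
  destruct (Rcomplete.R_complete _ (Hcoord snd Rabs_snd_le_edist)) as [l2 Hl2].
  exists (l1, l2); intros e He.
  destruct (Hl1 (e / 2)) as [N1 HN1]; [lra|]; destruct (Hl2 (e / 2)) as [N2 HN2]; [lra|].
  exists (N1 + N2)%nat; intros n Hn.
  specialize (HN1 n ltac:(lia)); specialize (HN2 n ltac:(lia)); unfold Rdist in *.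
  generalize (edist_le_l1 (z n) (l1, l2)); simpl; lra.
Qed.

Section GeometricSteps.

Variables (z : nat -> pt) (r : nat -> R) (k : R).
Hypothesis k_range : 0 <= k < 1.
Hypothesis step_le : forall n, edist (z n) (z (S n)) <= r n.
Hypothesis ratio_le : forall n, r (S n) <= k * r n.

Lemma geometric_tail n m : edist (z n) (z (m + n)%nat) <= r n / (1 - k).
Proof.
  revert n; induction m as [|m IH]; intro n.
  - rewrite edist_xx; generalize (edist_ge0 (z n) (z (S n))) (step_le n); intros.
    apply Rdiv_le_0_compat; lra.
  - replace (S m + n)%nat with (m + S n)%nat by lia.
    generalize (edist_triangle (z n) (z (m + S n)%nat) (z (S n))) (IH (S n)) (step_le n).
    assert (r (S n) / (1 - k) <= k * r n / (1 - k)).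
    { apply Rmult_le_compat_r; [apply Rlt_le, Rinv_0_lt_compat; lra | apply ratio_le]. }
    replace (r n / (1 - k)) with (r n + k * r n / (1 - k)) by (field; lra); lra.
Qed.

Lemma geometric_vanish e : 0 < e -> exists N, r N < e.
Proof.
  intro He.
  assert (Hpow : forall n, r n <= k ^ n * r 0%nat).
  { induction n as [|n IH]; [simpl; lra|].
    simpl; generalize (ratio_le n); rewrite Rmult_assoc; intros; nra. }
  set (C := Rabs (r 0%nat) + 1).
  assert (HC : 0 < C) by (unfold C; generalize (Rabs_pos (r 0%nat)); lra).
  destruct (pow_lt_1_zero k ltac:(rewrite Rabs_right; lra) (e / C)) as [N HN].
  { apply Rdiv_lt_0_compat; lra. }
  exists N; specialize (HN N (le_n N)); specialize (Hpow N).
  assert (Hk : k ^ N * r 0%nat <= Rabs (k ^ N) * C).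
  { eapply Rle_trans; [apply Rle_abs|]; rewrite Rabs_mult.
    apply Rmult_le_compat_l; [apply Rabs_pos | unfold C; lra]. }
  assert (Hlt : Rabs (k ^ N) * C < e / C * C) by (apply Rmult_lt_compat_r; lra).
  replace (e / C * C) with e in Hlt by (field; lra); lra.
Qed.

Lemma geometric_limit : exists l, seq_cv z l /\ forall n, edist (z n) l <= r n / (1 - k).
Proof.
  destruct (cauchy_seq_cv z) as [l Hl].
  - intros e He.
    destruct (geometric_vanish (e * (1 - k) / 2)) as [N HN].
    { apply Rdiv_lt_0_compat; [apply Rmult_lt_0_compat|]; lra. }
    exists N; intros n m Hn Hm.
    generalize (geometric_tail N (n - N)) (geometric_tail N (m - N)).
    replace (n - N + N)%nat with n by lia; replace (m - N + N)%nat with m by lia.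
    generalize (edist_triangle (z n) (z m) (z N)); rewrite (edist_sym (z n) (z N)).
    assert (r N / (1 - k) < e / 2) by (apply Rlt_div_l; lra).
    lra.
  - exists l; split; [exact Hl|]; intro n.
    apply (edist_le_seq_cv _ _ _ _ n Hl); intros m Hm.
    replace m with (m - n + n)%nat by lia; apply geometric_tail.
Qed.

End GeometricSteps.

Definition cball (p : pt) (r : R) (q : pt) : Prop := edist p q <= r.

Lemma contraction_fixed_point (g : pt -> pt) (q : pt) (rho k : R) :
  0 <= k < 1 ->
  (forall x x', cball q rho x -> cball q rho x' -> edist (g x) (g x') <= k * edist x x') ->
  edist q (g q) <= (1 - k) * rho ->
  exists l, cball q rho l /\ g l = l.
Proof.
  intros Hk Hlip Hq.
  set (x := fun n => Nat.iter n g q).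
  assert (Hrho : 0 <= rho) by (generalize (edist_ge0 q (g q)); nra).
  (* the ball is invariant: d(q, g x) <= d(q, g q) + k d(q, x) <= (1 - k) rho + k rho *)
  assert (Hin : forall n, cball q rho (x n)).
  { induction n as [|n IH]; unfold cball in *; simpl.
    - rewrite edist_xx; exact Hrho.
    - assert (Hq0 : cball q rho q) by (unfold cball; rewrite edist_xx; exact Hrho).
      generalize (edist_triangle q (g (x n)) (g q)) (Hlip q (x n) Hq0 IH); nra. }
  assert (Hstep : forall n, edist (x (S n)) (x (S (S n))) <= k * edist (x n) (x (S n))).
  { intro n; apply Hlip; apply Hin. }
  destruct (geometric_limit x (fun n => edist (x n) (x (S n))) k Hk (fun n => Rle_refl _) Hstep)
    as [l [Hl _]].
  assert (Hlq : cball q rho l) by (apply (edist_le_seq_cv _ _ _ _ 0 Hl); intros; apply Hin).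
  exists l; split; [exact Hlq|].
  apply (seq_cv_unique (fun n => x (S n))).
  - intros e He; destruct (Hl e He) as [N HN]; exists N; intros n Hn.
    eapply Rle_lt_trans; [apply (Hlip _ _ (Hin n) Hlq)|].
    specialize (HN n Hn); generalize (edist_ge0 (x n) l); nra.
  - intros e He; destruct (Hl e He) as [N HN]; exists N; intros n Hn; apply HN; lia.
Qed.

Lemma differentiable_pt_lim_partial_x u x y lx ly : differentiable_pt_lim u x y lx ly ->
  derivable_pt_lim (fun t => u t y) x lx.
Proof.
  intro H.
  generalize (derivable_pt_lim_comp_2d u id (fct_cte y) x lx ly 1 0 H
    (derivable_pt_lim_id x) (derivable_pt_lim_const y x)).
  unfold id, fct_cte; rewrite Rmult_1_r, Rmult_0_r, Rplus_0_r; auto.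
Qed.

Lemma differentiable_pt_lim_partial_y u x y lx ly : differentiable_pt_lim u x y lx ly ->
  derivable_pt_lim (fun t => u x t) y ly.
Proof.
  intro H.
  generalize (derivable_pt_lim_comp_2d u (fct_cte x) id y lx ly 0 1 H
    (derivable_pt_lim_const x y) (derivable_pt_lim_id y)).
  unfold id, fct_cte; rewrite Rmult_1_r, Rmult_0_r, Rplus_0_l; auto.
Qed.

Lemma MVT_Rmin_Rmax (f f' : R -> R) a b :
  (forall c, Rmin a b <= c <= Rmax a b -> derivable_pt_lim f c (f' c)) ->
  exists c, Rmin a b <= c <= Rmax a b /\ f b - f a = f' c * (b - a).
Proof.
  intro H; destruct (Rtotal_order a b) as [h|[<-|h]].
  - rewrite Rmin_left, Rmax_right in * by lra.
    destruct (MVT_cor2 f f' a b h H) as [c [Hmvt Hc]]; exists c; split; [lra | exact Hmvt].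
  - exists a; rewrite Rmin_left, Rmax_left by lra; split; [lra | ring].
  - rewrite Rmin_right, Rmax_left in * by lra.
    destruct (MVT_cor2 f f' b a h H) as [c [Hmvt Hc]]; exists c; split; lra.
Qed.

Definition square (q : pt) (rho : R) (x : pt) : Prop :=
  Rabs (fst x - fst q) <= rho /\ Rabs (snd x - snd q) <= rho.

Lemma Rabs_sub_le_between q rho a b t : Rabs (a - q) <= rho -> Rabs (b - q) <= rho ->
  Rmin a b <= t <= Rmax a b -> Rabs (t - q) <= rho.
Proof.
  intros Ha Hb Ht; apply Rabs_le_between' in Ha; apply Rabs_le_between' in Hb.
  apply Rabs_le_between'; unfold Rmin, Rmax in Ht; destruct (Rle_dec a b); lra.
Qed.

Lemma cball_square q rho x : cball q rho x -> square q rho x.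
Proof.
  unfold cball, square; intro H; rewrite (Rabs_minus_sym (fst x)), (Rabs_minus_sym (snd x)).
  generalize (Rabs_fst_le_edist q x) (Rabs_snd_le_edist q x); lra.
Qed.

Definition partials_near (S : pt -> Prop) (u : R -> R -> R) (a b k : R) : Prop :=
  forall x, S x ->
    differentiable_pt_lim u (fst x) (snd x) (dx u (fst x) (snd x)) (dy u (fst x) (snd x)) /\
    Rabs (dx u (fst x) (snd x) - a) <= k /\ Rabs (dy u (fst x) (snd x) - b) <= k.

Lemma increment_near_linear u q rho a b k : partials_near (square q rho) u a b k ->
  forall x x', square q rho x -> square q rho x' ->
  Rabs (u (fst x) (snd x) - u (fst x') (snd x') - (a * (fst x - fst x') + b * (snd x - snd x')))
  <= k * (Rabs (fst x - fst x') + Rabs (snd x - snd x')).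
Proof.
  intros Hnear [x1 x2] [x1' x2'] [Hx1 Hx2] [Hx1' Hx2']; simpl in *.
  (* go from x' to x along a horizontal, then a vertical segment inside the square *)
  assert (Hh : forall t, Rmin x1' x1 <= t <= Rmax x1' x1 -> square q rho (t, x2)).
  { intros t Ht; split; simpl; [exact (Rabs_sub_le_between _ _ _ _ t Hx1' Hx1 Ht) | exact Hx2]. }
  assert (Hv : forall t, Rmin x2' x2 <= t <= Rmax x2' x2 -> square q rho (x1', t)).
  { intros t Ht; split; simpl; [exact Hx1' | exact (Rabs_sub_le_between _ _ _ _ t Hx2' Hx2 Ht)]. }
  destruct (MVT_Rmin_Rmax (fun t => u t x2) (fun t => dx u t x2) x1' x1) as [s [Hs Hus]].
  { intros t Ht; destruct (Hnear _ (Hh t Ht)) as [Hd _].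
    exact (differentiable_pt_lim_partial_x _ _ _ _ _ Hd). }
  destruct (MVT_Rmin_Rmax (fun t => u x1' t) (fun t => dy u x1' t) x2' x2) as [t [Ht Hut]].
  { intros t Ht; destruct (Hnear _ (Hv t Ht)) as [Hd _].
    exact (differentiable_pt_lim_partial_y _ _ _ _ _ Hd). }
  destruct (Hnear _ (Hh s Hs)) as (_ & Ha & _); destruct (Hnear _ (Hv t Ht)) as (_ & _ & Hb).
  simpl in *.
  replace (u x1 x2 - u x1' x2' - (a * (x1 - x1') + b * (x2 - x2')))
    with ((dx u s x2 - a) * (x1 - x1') + (dy u x1' t - b) * (x2 - x2')) by lra.
  eapply Rle_trans; [apply Rabs_triang|]; rewrite !Rabs_mult.
  generalize (Rabs_pos (x1 - x1')) (Rabs_pos (x2 - x2')); nra.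
Qed.

(* Cramer's rule: [solve2 a b c d p = A^-1 p] for the matrix [A = [[a, b], [c, d]]]. *)
Definition solve2 (a b c d : R) (p : pt) : pt :=
  ((d * fst p - b * snd p) / (a * d - b * c), (a * snd p - c * fst p) / (a * d - b * c)).

(* Newton's map [x - A^-1 (f x - y)] with the derivative frozen at [A]: its fixed points
   solve [f x = y], and it contracts where [Df] stays close to [A]. *)
Definition newton (u v : R -> R -> R) (a b c d : R) (y x : pt) : pt :=
  let e := solve2 a b c d (u (fst x) (snd x) - fst y, v (fst x) (snd x) - snd y) in
  (fst x - fst e, snd x - snd e).

Lemma Rabs_sum4_ge0 a b c d : 0 <= Rabs a + Rabs b + Rabs c + Rabs d.
Proof. generalize (Rabs_pos a) (Rabs_pos b) (Rabs_pos c) (Rabs_pos d); lra. Qed.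

Section Newton.

Variables (u v : R -> R -> R) (a b c d : R).
Hypothesis det_neq0 : a * d - b * c <> 0.

Let M := Rabs a + Rabs b + Rabs c + Rabs d.

Lemma solve2_l1_bound p :
  Rabs (fst (solve2 a b c d p)) + Rabs (snd (solve2 a b c d p))
  <= M / Rabs (a * d - b * c) * (Rabs (fst p) + Rabs (snd p)).
Proof.
  assert (Hdet : 0 < Rabs (a * d - b * c)) by (apply Rabs_pos_lt; exact det_neq0).
  assert (Hlin : forall s t x y, Rabs (s * x - t * y) <= Rabs s * Rabs x + Rabs t * Rabs y).
  { intros; unfold Rminus; eapply Rle_trans; [apply Rabs_triang|].
    rewrite Rabs_Ropp, !Rabs_mult; lra. }
  unfold solve2, Rdiv; simpl; rewrite !Rabs_mult, Rabs_inv, <- Rmult_plus_distr_r.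
  replace (M * / Rabs (a * d - b * c) * (Rabs (fst p) + Rabs (snd p)))
    with (M * (Rabs (fst p) + Rabs (snd p)) * / Rabs (a * d - b * c)) by ring.
  apply Rmult_le_compat_r; [apply Rlt_le, Rinv_0_lt_compat, Hdet|].
  generalize (Hlin d b (fst p) (snd p)) (Hlin a c (snd p) (fst p)).
  generalize (Rabs_pos (fst p)) (Rabs_pos (snd p)).
  unfold M; generalize (Rabs_pos a) (Rabs_pos b) (Rabs_pos c) (Rabs_pos d); nra.
Qed.

Lemma newton_fixed_point y x : newton u v a b c d y x = x -> fmap u v x = y.
Proof.
  destruct x as [x1 x2], y as [y1 y2]; unfold newton, solve2, fmap; simpl.
  set (e1 := u x1 x2 - y1); set (e2 := v x1 x2 - y2); intro H; injection H; intros H2 H1.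
  assert (F1 : d * e1 - b * e2 = 0).
  { apply (Rmult_eq_reg_r (/ (a * d - b * c))); [lra | apply Rinv_neq_0_compat, det_neq0]. }
  assert (F2 : a * e2 - c * e1 = 0).
  { apply (Rmult_eq_reg_r (/ (a * d - b * c))); [lra | apply Rinv_neq_0_compat, det_neq0]. }
  assert (E1 : e1 = 0).
  { apply (Rmult_eq_reg_l (a * d - b * c)); [|exact det_neq0].
    transitivity (a * (d * e1 - b * e2) + b * (a * e2 - c * e1)); [ring | rewrite F1, F2; ring]. }
  assert (E2 : e2 = 0).
  { apply (Rmult_eq_reg_l (a * d - b * c)); [|exact det_neq0].
    transitivity (d * (a * e2 - c * e1) + c * (d * e1 - b * e2)); [ring | rewrite F1, F2; ring]. }
  unfold e1, e2 in *; f_equal; lra.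
Qed.

Lemma newton_center_bound y q :
  edist q (newton u v a b c d y q) <= M / Rabs (a * d - b * c) * (2 * edist (fmap u v q) y).
Proof.
  set (e := (u (fst q) (snd q) - fst y, v (fst q) (snd q) - snd y)).
  change (edist q (fst q - fst (solve2 a b c d e), snd q - snd (solve2 a b c d e))
    <= M / Rabs (a * d - b * c) * (2 * edist (fmap u v q) y)).
  eapply Rle_trans; [apply edist_le_l1|]; cbn [fst snd].
  replace (fst q - (fst q - fst (solve2 a b c d e))) with (fst (solve2 a b c d e)) by ring.
  replace (snd q - (snd q - snd (solve2 a b c d e))) with (snd (solve2 a b c d e)) by ring.
  eapply Rle_trans; [apply solve2_l1_bound|]; apply Rmult_le_compat_l.
  - apply Rdiv_le_0_compat; [apply Rabs_sum4_ge0 | apply Rabs_pos_lt, det_neq0].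
  - generalize (Rabs_fst_le_edist (fmap u v q) y) (Rabs_snd_le_edist (fmap u v q) y).
    unfold e, fmap; simpl; lra.
Qed.

Lemma newton_contraction q rho k y :
  8 * k * (M + 1) <= Rabs (a * d - b * c) ->
  partials_near (square q rho) u a b k -> partials_near (square q rho) v c d k ->
  forall x x', square q rho x -> square q rho x' ->
  edist (newton u v a b c d y x) (newton u v a b c d y x') <= / 2 * edist x x'.
Proof.
  intros Hk Hu Hv x x' Hx Hx'.
  set (L1 := Rabs (fst x - fst x') + Rabs (snd x - snd x')).
  set (e1 := u (fst x) (snd x) - u (fst x') (snd x') - (a * (fst x - fst x') + b * (snd x - snd x'))).
  set (e2 := v (fst x) (snd x) - v (fst x') (snd x') - (c * (fst x - fst x') + d * (snd x - snd x'))).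
  (* N(x) - N(x') = - A^-1 (f x - f x' - A (x - x')): the linear part cancels *)
  assert (Hdiff : fst (newton u v a b c d y x) - fst (newton u v a b c d y x') = - fst (solve2 a b c d (e1, e2))
               /\ snd (newton u v a b c d y x) - snd (newton u v a b c d y x') = - snd (solve2 a b c d (e1, e2))).
  { unfold newton, solve2, e1, e2; simpl; split; field; exact det_neq0. }
  assert (He1 : Rabs e1 <= k * L1) by exact (increment_near_linear _ _ _ _ _ _ Hu x x' Hx Hx').
  assert (He2 : Rabs e2 <= k * L1) by exact (increment_near_linear _ _ _ _ _ _ Hv x x' Hx Hx').
  assert (HL1 : L1 <= 2 * edist x x') by (generalize (Rabs_fst_le_edist x x') (Rabs_snd_le_edist x x'); unfold L1; lra).
  assert (Hdet : 0 < Rabs (a * d - b * c)) by (apply Rabs_pos_lt; exact det_neq0).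
  assert (HQ : M / Rabs (a * d - b * c) * (4 * k) <= / 2).
  { apply (Rmult_le_reg_r (Rabs (a * d - b * c))); [exact Hdet|].
    field_simplify; [|lra]; generalize (Rabs_sum4_ge0 a b c d); fold M; nra. }
  eapply Rle_trans; [apply edist_le_l1|]; destruct Hdiff as [-> ->]; rewrite !Rabs_Ropp.
  eapply Rle_trans; [apply solve2_l1_bound|]; cbn [fst snd].
  assert (Hk0 : 0 <= k) by (destruct (Hu x Hx) as (_ & Ha & _); generalize (Rabs_pos (dx u (fst x) (snd x) - a)); lra).
  eapply Rle_trans.
  { apply Rmult_le_compat_l; [apply Rdiv_le_0_compat; [apply Rabs_sum4_ge0 | exact Hdet]|].
    assert (Rabs e1 + Rabs e2 <= 4 * k * edist x x') by nra; exact H. }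
  replace (M / Rabs (a * d - b * c) * (4 * k * edist x x'))
    with (M / Rabs (a * d - b * c) * (4 * k) * edist x x') by ring.
  apply Rmult_le_compat_r; [apply edist_ge0 | exact HQ].
Qed.

End Newton.

Lemma C1_partials_near D u q k : is_open D -> C1_on D u -> D q -> 0 < k ->
  exists delta, 0 < delta /\ forall rho, rho <= delta ->
    partials_near (square q rho) u (dx u (fst q) (snd q)) (dy u (fst q) (snd q)) k.
Proof.
  intros HD Cu Hq Hk.
  destruct (HD q Hq) as [rD [HrD HDq]].
  destruct (Cu (fst q) (snd q)) as (_ & Cdx & Cdy); [destruct q; exact Hq|].
  destruct (Cdx (mkposreal k Hk)) as [d1 H1]; destruct (Cdy (mkposreal k Hk)) as [d2 H2].
  generalize (cond_pos d1) (cond_pos d2); intros Hd1 Hd2; simpl in *.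
  exists (Rmin (rD / 4) (Rmin (d1 / 2) (d2 / 2))).
  generalize (Rmin_l (rD / 4) (Rmin (d1 / 2) (d2 / 2))) (Rmin_r (rD / 4) (Rmin (d1 / 2) (d2 / 2)))
    (Rmin_l (d1 / 2) (d2 / 2)) (Rmin_r (d1 / 2) (d2 / 2)); intros m1 m2 m3 m4.
  split; [repeat apply Rmin_glb_lt; lra|].
  intros rho Hrho x [Hx1 Hx2].
  assert (HxD : D (fst x, snd x)).
  { apply HDq; unfold eball; eapply Rle_lt_trans; [apply edist_le_l1|]; simpl.
    rewrite (Rabs_minus_sym (fst q)), (Rabs_minus_sym (snd q)); lra. }
  destruct (Cu _ _ HxD) as [Hdiff _]; split; [exact Hdiff|].
  split; apply Rlt_le; [apply H1 | apply H2]; lra.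
Qed.

Theorem regular_point_local_onto D u v q eta :
  is_open D -> C1_on D u -> C1_on D v -> D q -> jac u v q <> 0 -> 0 < eta ->
  exists s, 0 < s /\ forall y, eball (fmap u v q) s y -> exists x, eball q eta x /\ fmap u v x = y.
Proof.
  intros HD Cu Cv Hq Hjac Heta; unfold jac in Hjac.
  set (a := dx u (fst q) (snd q)) in *; set (b := dy u (fst q) (snd q)) in *.
  set (c := dx v (fst q) (snd q)) in *; set (d := dy v (fst q) (snd q)) in *.
  assert (Hdet : 0 < Rabs (a * d - b * c)) by (apply Rabs_pos_lt; exact Hjac).
  set (M := Rabs a + Rabs b + Rabs c + Rabs d); generalize (Rabs_sum4_ge0 a b c d); fold M; intro HM.
  set (k := Rabs (a * d - b * c) / (8 * (M + 1))).
  assert (Hk : 0 < k) by (apply Rdiv_lt_0_compat; lra).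
  destruct (C1_partials_near D u q k HD Cu Hq Hk) as [du [Hdu Hu]].
  destruct (C1_partials_near D v q k HD Cv Hq Hk) as [dv [Hdv Hv]].
  set (rho := Rmin (Rmin du dv) (eta / 2)).
  generalize (Rmin_l (Rmin du dv) (eta / 2)) (Rmin_r (Rmin du dv) (eta / 2))
    (Rmin_l du dv) (Rmin_r du dv); fold rho; intros m1 m2 m3 m4.
  assert (Hrho : 0 < rho) by (repeat apply Rmin_glb_lt; lra).
  exists (rho * Rabs (a * d - b * c) / (4 * (M + 1))); split.
  { apply Rdiv_lt_0_compat; [apply Rmult_lt_0_compat|]; lra. }
  intros y Hy; unfold eball in Hy.
  destruct (contraction_fixed_point (newton u v a b c d y) q rho (/ 2)) as [l [Hl Hfix]].
  - lra.
  - intros x x' Hx Hx'; apply (newton_contraction u v a b c d Hjac q rho k);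
      [fold M; unfold k; right; field; lra | apply Hu; lra | apply Hv; lra
      | apply cball_square; assumption ..].
  - eapply Rle_trans; [apply newton_center_bound; exact Hjac|]; fold M.
    eapply Rle_trans.
    { apply Rmult_le_compat_l; [apply Rdiv_le_0_compat; lra|].
      apply Rmult_le_compat_l; [lra | apply Rlt_le, Hy]. }
    replace (M / Rabs (a * d - b * c) * (2 * (rho * Rabs (a * d - b * c) / (4 * (M + 1)))))
      with (rho / 2 * (M / (M + 1))) by (field; lra).
    assert (M / (M + 1) <= 1) by (apply Rle_div_l; lra).
    replace ((1 - / 2) * rho) with (rho / 2 * 1) by field.
    apply Rmult_le_compat_l; lra.
  - exists l; split; [unfold cball, eball in *; lra|].
    exact (newton_fixed_point u v a b c d Hjac y l Hfix).
Qed.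

Definition escapes (D : pt -> Prop) (z : nat -> pt) : Prop :=
  (exists b, boundary D b /\ seq_cv z b) \/ seq_to_infty z.

Lemma escapes_far_from_cball D z p rho : is_open D -> (forall x, cball p rho x -> D x) ->
  escapes D z -> exists delta, 0 < delta /\
    exists N, forall n, (N <= n)%nat -> rho + delta <= edist p (z n).
Proof.
  intros HD Hball [[b [[_ Hb] Hcv]] | Hinf].
  - (* the boundary point b is not in the open set D, hence not in the closed ball *)
    assert (Hpb : rho < edist p b).
    { apply Rnot_le_lt; intro Hle; apply Hb, HD, Hball, Hle. }
    exists ((edist p b - rho) / 2); split; [lra|].
    destruct (Hcv ((edist p b - rho) / 2)) as [N HN]; [lra|].
    exists N; intros n Hn; specialize (HN n Hn).
    generalize (edist_triangle p b (z n)); lra.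
  - exists 1; split; [lra|].
    destruct (Hinf (enorm p + rho + 1)) as [N HN]; exists N; intros n Hn.
    specialize (HN n Hn); rewrite !enorm_edist in *.
    generalize (edist_triangle (z n) (0, 0) p); rewrite (edist_sym (z n) p); lra.
Qed.

Lemma escapes_far_from_cballs D z L : is_open D ->
  (forall b, In b L -> forall x, cball (fst b) (snd b) x -> D x) -> escapes D z ->
  exists delta, 0 < delta /\ exists N, forall n, (N <= n)%nat ->
    forall b, In b L -> snd b + delta <= edist (fst b) (z n).
Proof.
  intros HD HL Hz; induction L as [|b0 L IH].
  - exists 1; split; [lra|]; exists 0%nat; intros n _ b [].
  - destruct IH as [d1 [Hd1 [N1 HN1]]]; [intros b Hb; apply HL; right; exact Hb|].
    destruct (escapes_far_from_cball D z (fst b0) (snd b0) HD (HL b0 (or_introl eq_refl)) Hz)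
      as [d2 [Hd2 [N2 HN2]]].
    exists (Rmin d1 d2); split; [apply Rmin_glb_lt; assumption|].
    exists (N1 + N2)%nat; intros n Hn b [<-|Hb].
    + generalize (Rmin_r d1 d2) (HN2 n ltac:(lia)); lra.
    + generalize (Rmin_l d1 d2) (HN1 n ltac:(lia) b Hb); lra.
Qed.

Lemma exists_regular_point_near D u v z0 delta : nowhere_dense (crit D u v) -> 0 < delta ->
  (forall x, eball z0 delta x -> D x) -> exists q, eball z0 delta q /\ D q /\ jac u v q <> 0.
Proof.
  intros Hnd Hdelta HD; apply NNPP; intro Hnone.
  apply (Hnd z0); exists delta; split; [exact Hdelta|].
  intros q Hq r Hr; exists q; split.
  - split; [apply HD, Hq|]; apply NNPP; intro Hjac; apply Hnone; exists q; auto.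
  - unfold eball; rewrite edist_xx; exact Hr.
Qed.

Lemma fmap_continuous_at D u v z0 : C1_on D u -> C1_on D v -> D z0 ->
  forall e, 0 < e -> exists delta, 0 < delta /\
    forall x, edist z0 x < delta -> edist (fmap u v z0) (fmap u v x) < e.
Proof.
  intros Cu Cv Hz e He; destruct z0 as [z1 z2].
  destruct (Cu z1 z2 Hz) as [Du _]; destruct (Cv z1 z2 Hz) as [Dv _].
  assert (He2 : 0 < e / 2) by lra.
  destruct (differentiable_continuity_pt u z1 z2 (ex_intro _ _ (ex_intro _ _ Du)) (mkposreal _ He2))
    as [d1 H1].
  destruct (differentiable_continuity_pt v z1 z2 (ex_intro _ _ (ex_intro _ _ Dv)) (mkposreal _ He2))
    as [d2 H2].
  simpl in H1, H2; generalize (cond_pos d1) (cond_pos d2) (Rmin_l d1 d2) (Rmin_r d1 d2); intros.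
  exists (Rmin d1 d2); split; [apply Rmin_glb_lt; assumption|].
  intros [x1 x2] Hx.
  generalize (Rabs_fst_le_edist (z1, z2) (x1, x2)) (Rabs_snd_le_edist (z1, z2) (x1, x2)); simpl.
  rewrite (Rabs_minus_sym z1), (Rabs_minus_sym z2); intros Hx1 Hx2.
  specialize (H1 x1 x2 ltac:(lra) ltac:(lra)); specialize (H2 x1 x2 ltac:(lra) ltac:(lra)).
  eapply Rle_lt_trans; [apply edist_le_l1|]; unfold fmap; simpl.
  rewrite (Rabs_minus_sym (u z1 z2)), (Rabs_minus_sym (v z1 z2)); lra.
Qed.

Lemma escaping_regular_point D u v L c r :
  is_open D -> C1_on D u -> C1_on D v -> nowhere_dense (crit D u v) ->
  cluster_set D u v c -> (forall b, In b L -> forall x, cball (fst b) (snd b) x -> D x) -> 0 < r ->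
  exists q eta, 0 < eta /\ D q /\ jac u v q <> 0 /\ edist c (fmap u v q) < r /\
    (forall x, cball q eta x -> D x) /\
    (forall b, In b L -> forall x, cball q eta x -> ~ cball (fst b) (snd b) x).
Proof.
  intros HD Cu Cv Hnd [z [HzD [Hesc Hcv]]] HL Hr.
  destruct (escapes_far_from_cballs D z L HD HL Hesc) as [dg [Hdg [N1 HN1]]].
  destruct (Hcv (r / 2)) as [N2 HN2]; [lra|].
  set (z0 := z (N1 + N2)%nat).
  assert (Hfz0 : edist c (fmap u v z0) < r / 2) by (rewrite edist_sym; apply HN2; lia).
  assert (Hfar : forall b, In b L -> snd b + dg <= edist (fst b) z0) by (apply HN1; lia).
  destruct (HD z0 (HzD _)) as [rD [HrD Hz0D]].
  destruct (fmap_continuous_at D u v z0 Cu Cv (HzD _) (r / 2)) as [dc [Hdc Hcont]]; [lra|].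
  set (delta := Rmin rD (Rmin dg dc)).
  generalize (Rmin_l rD (Rmin dg dc)) (Rmin_r rD (Rmin dg dc)) (Rmin_l dg dc) (Rmin_r dg dc);
    fold delta; intros m1 m2 m3 m4.
  assert (Hdelta : 0 < delta) by (repeat apply Rmin_glb_lt; assumption).
  destruct (exists_regular_point_near D u v z0 delta Hnd Hdelta) as [q [Hq [HqD Hjac]]].
  { intros x Hx; apply Hz0D; unfold eball in *; lra. }
  unfold eball in Hq.
  assert (Hnear : forall x, cball q ((delta - edist z0 q) / 2) x -> edist z0 x < delta).
  { intros x Hx; unfold cball in Hx; generalize (edist_triangle z0 x q); lra. }
  exists q, ((delta - edist z0 q) / 2); split; [lra|]; split; [exact HqD|]; split; [exact Hjac|].
  split; [|split].
  - generalize (edist_triangle c (fmap u v q) (fmap u v z0)) (Hcont q ltac:(lra)); lra.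
  - intros x Hx; apply Hz0D; unfold eball; specialize (Hnear x Hx); lra.
  - intros b Hb x Hx Hbx; unfold cball in Hbx.
    generalize (Hfar b Hb) (Hnear x Hx) (edist_triangle (fst b) z0 x); rewrite (edist_sym z0 x); lra.
Qed.

Definition disjoint_cballs (L : list (pt * R)) : Prop :=
  ForallOrdPairs (fun b b' => forall x, cball (fst b) (snd b) x -> ~ cball (fst b') (snd b') x) L.

Definition stage D u v (W : pt -> Prop) (L : list (pt * R)) (c : pt) (r : R) : Prop :=
  0 < r /\ (forall y, eball c r y -> W y) /\ disjoint_cballs L /\
  (forall b, In b L -> forall x, cball (fst b) (snd b) x -> D x) /\
  (forall y, eball c r y -> forall b, In b L ->
     exists x, cball (fst b) (snd b) x /\ D x /\ fmap u v x = y).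

Lemma stage_step D u v W L c r :
  is_open D -> C1_on D u -> C1_on D v -> nowhere_dense (crit D u v) ->
  (forall y, W y -> cluster_set D u v y) -> stage D u v W L c r ->
  exists b c' r', stage D u v W (b :: L) c' r' /\ r' <= r / 4 /\ edist c c' <= r / 2.
Proof.
  intros HD Cu Cv Hnd HWC [Hr [HW [Hdisj [HLD Hpre]]]].
  assert (Hc : cluster_set D u v c) by (apply HWC, HW; unfold eball; rewrite edist_xx; exact Hr).
  destruct (escaping_regular_point D u v L c (r / 2) HD Cu Cv Hnd Hc HLD)
    as (q & eta & Heta & Hq & Hjac & Hcq & HqD & Hqdisj); [lra|].
  destruct (regular_point_local_onto D u v q eta HD Cu Cv Hq Hjac Heta) as [s [Hs Honto]].
  generalize (Rmin_l s (r / 4)) (Rmin_r s (r / 4)); intros m1 m2.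
  assert (Hsub : forall y, eball (fmap u v q) (Rmin s (r / 4)) y -> eball c r y).
  { unfold eball; intros y Hy; generalize (edist_triangle c y (fmap u v q)); lra. }
  exists (q, eta), (fmap u v q), (Rmin s (r / 4)); split; [|split; [exact m2 | lra]].
  split; [apply Rmin_glb_lt; lra|]; split; [intros y Hy; apply HW, Hsub, Hy|].
  split; [|split].
  - constructor; [apply Forall_forall; exact Hqdisj | exact Hdisj].
  - intros b [<-|Hb]; [exact HqD | exact (HLD b Hb)].
  - intros y Hy b [<-|Hb]; [|exact (Hpre y (Hsub y Hy) b Hb)].
    destruct (Honto y) as [x [Hx Hfx]]; [unfold eball in *; lra|].
    exists x; unfold eball in Hx; unfold cball; simpl; split; [lra|]; split; [apply HqD; unfold cball; lra | exact Hfx].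
Qed.

Lemma dependent_choice_seq {A : Type} (P : A -> Prop) (Q : A -> A -> Prop) (a0 : A) :
  P a0 -> (forall a, P a -> exists a', P a' /\ Q a a') ->
  exists s : nat -> A, s 0%nat = a0 /\ forall n, P (s n) /\ Q (s n) (s (S n)).
Proof.
  intros H0 Hstep.
  destruct (functional_choice_imp_functional_dependent_choice choice
              (fun a a' => P a -> P a' /\ Q a a')) with (x0 := a0) as [s [Hs0 Hs]].
  { intro a; destruct (classic (P a)) as [Ha|Ha].
    - destruct (Hstep a Ha) as [a' Ha']; exists a'; auto.
    - exists a; tauto. }
  assert (HP : forall n, P (s n)) by (induction n; [rewrite Hs0; exact H0 | apply (Hs n IHn)]).
  exists s; split; [exact Hs0 | intro n; split; [apply HP | apply (Hs n (HP n))]].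
Qed.

Lemma nested_stages_limit D u v W c0 r0 :
  is_open D -> C1_on D u -> C1_on D v -> nowhere_dense (crit D u v) ->
  (forall y, W y -> cluster_set D u v y) -> stage D u v W nil c0 r0 ->
  exists l, W l /\ forall n, exists L, length L = n /\ disjoint_cballs L /\
    forall b, In b L -> exists x, cball (fst b) (snd b) x /\ D x /\ fmap u v x = l.
Proof.
  intros HD Cu Cv Hnd HWC H0.
  destruct (dependent_choice_seq
              (fun s => stage D u v W (fst (fst s)) (snd (fst s)) (snd s))
              (fun s s' => length (fst (fst s')) = S (length (fst (fst s)))
                           /\ snd s' <= snd s / 4 /\ edist (snd (fst s)) (snd (fst s')) <= snd s / 2)
              (nil, c0, r0) H0) as [s [Hs0 Hs]].
  { intros [[L c] r] HP; destruct (stage_step D u v W L c r HD Cu Cv Hnd HWC HP)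
      as (b & c' & r' & Hst & Hr' & Hc'); exists (b :: L, c', r'); simpl; auto. }
  set (c := fun n => snd (fst (s n))); set (r := fun n => snd (s n)).
  destruct (geometric_limit c (fun n => r n / 2) (/ 4)) as [l [_ Hl]]; [lra | apply Hs |..].
  { intro n; destruct (Hs n) as (_ & _ & Hr & _); unfold r; lra. }
  assert (Hin : forall n, eball (c n) (r n) l).
  { intro n; destruct (Hs n) as ((Hr & _) & _); change (0 < r n) in Hr.
    specialize (Hl n); cbv beta in Hl; unfold eball.
    replace (r n / 2 / (1 - / 4)) with (2 / 3 * r n) in Hl by field; lra. }
  exists l; split.
  - destruct (Hs 0%nat) as ((_ & HW & _) & _); apply HW, Hin.
  - intro n; exists (fst (fst (s n))); split; [|split].
    + induction n as [|n IH]; [rewrite Hs0; reflexivity|].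
      destruct (Hs n) as (_ & Hlen & _); rewrite Hlen, IH; reflexivity.
    + apply (Hs n).
    + destruct (Hs n) as ((_ & _ & _ & _ & Hpre) & _); exact (Hpre l (Hin n)).
Qed.

Lemma distinct_witnesses {A T : Type} (F : A -> T -> Prop) (P : T -> Prop) (L : list A) :
  ForallOrdPairs (fun a a' => forall x, F a x -> ~ F a' x) L ->
  (forall a, In a L -> exists x, F a x /\ P x) ->
  exists X, NoDup X /\ length X = length L /\
    forall x, In x X -> P x /\ exists a, In a L /\ F a x.
Proof.
  induction L as [|a L IH]; intros Hdisj Hwit.
  - exists nil; split; [constructor|]; split; [reflexivity | intros x []].
  - inversion Hdisj as [|? ? Hhead Htail]; subst.
    destruct IH as (X & HX & Hlen & HXP); [exact Htail | intros a' Ha'; apply Hwit; right; exact Ha'|].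
    destruct (Hwit a (or_introl eq_refl)) as [x [Hx HPx]].
    exists (x :: X); split; [|split; [simpl; rewrite Hlen; reflexivity|]].
    + constructor; [|exact HX]; intro HxX.
      destruct (HXP x HxX) as (_ & a' & Ha' & Ha'x).
      rewrite Forall_forall in Hhead; exact (Hhead a' Ha' x Hx Ha'x).
    + intros y [<-|Hy]; [split; [exact HPx | exists a; split; [left|]; auto]|].
      destruct (HXP y Hy) as (HPy & a' & Ha' & Ha'y); split; [exact HPy | exists a'; split; [right|]; auto].
Qed.

Lemma val_infinite_of_NoDup D u v w :
  (forall n, exists X, NoDup X /\ length X = n /\ forall x, In x X -> D x /\ fmap u v x = w) ->
  val_infinite D u v w.
Proof.
  intros H [l Hl]; destruct (H (S (length l))) as (X & HX & Hlen & HXw).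
  assert (Hincl : incl X l) by (intros x Hx; apply Hl; apply HXw, Hx).
  generalize (NoDup_incl_length HX Hincl); lia.
Qed.

Theorem theorem3p9 (D : pt -> Prop) (u v : R -> R -> R) :
  is_open D ->
  C1_on D u -> C1_on D v ->
  nowhere_dense (crit D u v) ->
  (exists w0, interior2 (cluster_set D u v) w0) ->
  forall w, interior2 (cluster_set D u v) w ->
  forall eps, 0 < eps ->
  exists w', eball w eps w' /\ interior2 (cluster_set D u v) w' /\
             val_infinite D u v w'.
Proof.
  intros HD Cu Cv Hnd _ w [rw [Hrw HCw]] eps Heps.
  set (e := Rmin (rw / 2) eps); generalize (Rmin_l (rw / 2) eps) (Rmin_r (rw / 2) eps); fold e; intros m1 m2.
  assert (He : 0 < e) by (apply Rmin_glb_lt; lra).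
  assert (Hint : forall y, eball w e y -> interior2 (cluster_set D u v) y).
  { intros y Hy; exists (rw / 2); split; [lra|]; intros x Hx; apply HCw.
    generalize (edist_triangle w x y); unfold eball in *; lra. }
  destruct (nested_stages_limit D u v (eball w e) w e HD Cu Cv Hnd) as [l [Hl Hsheets]].
  - intros y Hy; destruct (Hint y Hy) as [r [Hr Hball]]; apply Hball.
    unfold eball; rewrite edist_xx; exact Hr.
  - repeat split; auto; [constructor | intros b [] | intros y _ b []].
  - exists l; split; [unfold eball in *; lra|]; split; [exact (Hint l Hl)|].
    apply val_infinite_of_NoDup; intro n; destruct (Hsheets n) as (L & Hlen & Hdisj & Hpre).
    destruct (distinct_witnesses (fun b => cball (fst b) (snd b)) (fun x => D x /\ fmap u v x = l) L)
      as (X & HX & HXlen & HXP); [exact Hdisj | exact Hpre|].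
    exists X; split; [exact HX|]; split; [congruence | intros x Hx; apply (HXP x Hx)].
Qed.
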